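(* The $k$-involutions $\mathcal{I}_{t_{(-1,-1)}}$, $\mathcal{I}_{t_{(-1,1)}}$ and $\mathcal{I}_{t_{(1,-1)}}$ of $G$ are pairwise isomorphic.
   Context: Let $k$ be a field with $\mathrm{char}(k)\neq 2$. Let $C$ be the split octonion algebra over $k$: $C=M_2(k)\times M_2(k)$ with elements $(x,y)$, $\bar x=\begin{bmatrix}x_{22}&-x_{12}\\-x_{21}&x_{11}\end{bmatrix}$ for $x=(x_{ij})$, multiplication $(x,y)(u,v)=(xu+\bar v y,\ vx+y\bar u)$, norm $N((x,y))=\det x-\det y$, identity $e=(I_2,0)$. Linear maps on $C$ are $8\times8$ matrices in the ordered basis $(E_{11},0),(E_{12},0),(E_{21},0),(E_{22},0),(0,E_{11}),(0,E_{12}),(0,E_{21}),(0,E_{22})$. $G=\mathrm{Aut}(C)$; $\mathcal{I}_g(x)=gxg^{-1}$. $t_{(\beta,\gamma)}=\mathrm{diag}(1,\beta\gamma,\beta^{-1}\gamma^{-1},1,\gamma^{-1},\beta,\beta^{-1},\gamma)$. A $k$-involution of $G$ is an automorphism of $G$ of order exactly $2$ defined over $k$; $\theta_1\cong\theta_2$ if $\theta_2=\mathcal{I}_g\theta_1\mathcal{I}_g^{-1}$ for some $g\in G(k)$. *)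

From HB Require Import structures.
From mathcomp Require Import all_boot all_order all_algebra.
Set Implicit Arguments. Unset Strict Implicit. Unset Printing Implicit Defensive.
Import GRing.Theory.
Local Open Scope ring_scope.

(* Split octonions C = M_2(R) x M_2(R). *)
Definition oct (R : Type) := ('M[R]_2 * 'M[R]_2)%type.

Definition obar (R : pzRingType) (x : 'M[R]_2) : 'M[R]_2 :=
  \matrix_(i < 2, j < 2) if i == j then x (rev_ord i) (rev_ord j) else - x i j.

Definition omul (R : pzRingType) (a b : oct R) : oct R :=
  (a.1 *m b.1 + obar b.2 *m a.2, b.2 *m a.1 + a.2 *m obar b.1).

(* Coordinates in the ordered basis (E11,0),(E12,0),(E21,0),(E22,0),
   (0,E11),(0,E12),(0,E21),(0,E22). *)
Definition vec_of_oct (R : pzRingType) (p : oct R) : 'cV[R]_8 :=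
  \col_(k < 8) if (k < 4)%N
               then p.1 (inord (k %/ 2)) (inord (k %% 2))
               else p.2 (inord ((k - 4) %/ 2)) (inord ((k - 4) %% 2)).

Definition oct_of_vec (R : pzRingType) (v : 'cV[R]_8) : oct R :=
  (\matrix_(i < 2, j < 2) v (inord (2 * i + j)) 0,
   \matrix_(i < 2, j < 2) v (inord (4 + 2 * i + j)) 0).

Definition oact (R : pzRingType) (g : 'M[R]_8) (p : oct R) : oct R :=
  oct_of_vec (g *m vec_of_oct p).

Definition isAut (R : fieldType) (g : 'M[R]_8) : Prop :=
  g \in unitmx /\ forall p q : oct R, oact g (omul p q) = omul (oact g p) (oact g q).

Definition innr (R : fieldType) (g x : 'M[R]_8) : 'M[R]_8 := g *m x *m invmx g.

Definition tmx (R : fieldType) (b c : R) : 'M[R]_8 :=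
  diag_mx (\row_(i < 8) nth 0 [:: 1; b * c; b^-1 * c^-1; 1; c^-1; b; b^-1; c] i).

(* theta1 = I_{t1} and theta2 = I_{t2} are isomorphic: there is g in G(k) with
   I_{t2} = I_g I_{t1} I_g^{-1} as automorphisms of the algebraic group G, i.e.
   the equality holds on G(L) for every field extension L of k. *)
Definition inv_iso (k : fieldType) (t1 t2 : 'M[k]_8) : Prop :=
  exists g : 'M[k]_8, isAut g /\
    forall (L : fieldType) (f : {rmorphism k -> L}) (x : 'M[L]_8),
      isAut x ->
      innr (map_mx f t2) x =
      innr (map_mx f g) (innr (map_mx f t1) (innr (invmx (map_mx f g)) x)).

From HB Require Import structures.
From mathcomp Require Import all_boot all_order all_algebra.
From mathcomp Require Import ring.
Import GRing.Theory.
Local Open Scope ring_scope.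

(* If g is in G(k) and
   g t1 = t2 g, then I_{t2} = I_g I_{t1} I_g^-1 on G(L) for every extension
   L of k, so I_{t1} and I_{t2} are isomorphic (lemma inv_iso_of_intertwiner).
   It therefore suffices to exhibit, for each pair, an explicit element of
   G(k) intertwining the two torus elements.  We use signed permutation
   matrices of the standard basis of C. *)

Lemma innr_intertwine (L : fieldType) (g t1 t2 x : 'M[L]_8) :
  g \in unitmx -> t1 \in unitmx -> g *m t1 = t2 *m g ->
  innr t2 x = innr g (innr t1 (innr (invmx g) x)).
Proof.
move=> Ug Ut1 gt1E.
have t2E : t2 = g *m t1 *m invmx g by rewrite gt1E mulmxK.
have t2Vr : t2 *m (g *m invmx t1 *m invmx g) = 1%:M.
  by rewrite t2E !mulmxA mulmxKV // mulmxK // mulmxV.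
have [Ut2 _] := mulmx1_unit t2Vr.
have t2VE : invmx t2 = g *m invmx t1 *m invmx g.
  by rewrite -[RHS](mulKmx Ut2) t2Vr mulmx1.
by rewrite /innr invmxK t2VE {1}t2E !mulmxA.
Qed.

Lemma inv_iso_of_intertwiner {k : fieldType} {g t1 t2 : 'M[k]_8} :
  isAut g -> t1 \in unitmx -> g *m t1 = t2 *m g -> inv_iso t1 t2.
Proof.
move=> gAut Ut1 gt1E; exists g; split=> // L f x _.
apply: innr_intertwine; rewrite ?map_unitmx ?(proj1 gAut) //.
by rewrite -!map_mxM gt1E.
Qed.

Lemma det_tmx (k : fieldType) (b c : k) : b != 0 -> c != 0 -> \det (tmx b c) = 1.
Proof.
move=> b0 c0; rewrite det_diag !big_ord_recr big_ord0 /= !mxE /=.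
by field; rewrite b0 c0.
Qed.

Lemma tmx_unit {k : fieldType} {b c : k} : b != 0 -> c != 0 -> tmx b c \in unitmx.
Proof. by move=> b0 c0; rewrite unitmxE det_tmx // unitr1. Qed.

Definition mk2 {R : Type} (a b c d : R) : 'M[R]_2 :=
  \matrix_(i < 2, j < 2) nth a (nth [::] [:: [:: a; b]; [:: c; d]] i) j.

Lemma inord_eq (n m p : nat) :
  (m < n.+1)%N -> (p < n.+1)%N -> ((inord m : 'I_n.+1) == inord p) = (m == p).
Proof. by move=> ltm ltp; apply/eqP/eqP => [E|->//]; rewrite -(inordK ltm) E inordK. Qed.

Lemma ord2P (P : 'I_2 -> Prop) : P (inord 0) -> P (inord 1) -> forall i, P i.
Proof.
move=> P0 P1 [i lti]; have -> : Ordinal lti = inord i by apply: val_inj; rewrite /= inordK.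
by case: i lti => [|[|]].
Qed.

Lemma ord8P (P : 'I_8 -> Prop) :
  P (inord 0) -> P (inord 1) -> P (inord 2) -> P (inord 3) ->
  P (inord 4) -> P (inord 5) -> P (inord 6) -> P (inord 7) -> forall i, P i.
Proof.
move=> P0 P1 P2 P3 P4 P5 P6 P7 [i lti].
have -> : Ordinal lti = inord i by apply: val_inj; rewrite /= inordK.
by do 8 (case: i lti => [|i] lti //).
Qed.

Lemma sum2 (R : nmodType) (F : 'I_2 -> R) : \sum_(i < 2) F i = F (inord 0) + F (inord 1).
Proof.
rewrite !big_ord_recr big_ord0 /= add0r.
by congr (F _ + F _); apply: val_inj; rewrite /= inordK.
Qed.

Lemma sum8 (R : nmodType) (F : 'I_8 -> R) :
  \sum_(i < 8) F i = F (inord 0) + F (inord 1) + F (inord 2) + F (inord 3)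
                   + F (inord 4) + F (inord 5) + F (inord 6) + F (inord 7).
Proof.
rewrite !big_ord_recr big_ord0 /= add0r.
by congr (F _ + F _ + F _ + F _ + F _ + F _ + F _ + F _); apply: val_inj; rewrite /= inordK.
Qed.

Lemma mk2_eta {R : Type} (x : 'M[R]_2) :
  x = mk2 (x (inord 0) (inord 0)) (x (inord 0) (inord 1))
          (x (inord 1) (inord 0)) (x (inord 1) (inord 1)).
Proof. by apply/matrixP; apply: ord2P; apply: ord2P; rewrite mxE ?inordK. Qed.

Lemma oct_coord_ind (R : Type) (P : oct R -> oct R -> Prop) :
  (forall a b c d e f g h a' b' c' d' e' f' g' h' : R,
     P (mk2 a b c d, mk2 e f g h) (mk2 a' b' c' d', mk2 e' f' g' h')) ->
  forall p q, P p q.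
Proof. by move=> HP [x y] [u v]; rewrite (mk2_eta x) (mk2_eta y) (mk2_eta u) (mk2_eta v). Qed.

Lemma omul_mk2 (R : comPzRingType) (a b c d e f g h a' b' c' d' e' f' g' h' : R) :
  omul (mk2 a b c d, mk2 e f g h) (mk2 a' b' c' d', mk2 e' f' g' h') =
  (mk2 (a*a' + b*c' + (h'*e - f'*g)) (a*b' + b*d' + (h'*f - f'*h))
       (c*a' + d*c' + (e'*g - g'*e)) (c*b' + d*d' + (e'*h - g'*f)),
   mk2 (e'*a + f'*c + (e*d' - f*c')) (e'*b + f'*d + (f*a' - e*b'))
       (g'*a + h'*c + (g*d' - h*c')) (g'*b + h'*d + (h*a' - g*b'))).
Proof.
rewrite /omul /obar; congr pair; apply/matrixP; apply: ord2P; apply: ord2P.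
all: rewrite !mxE !sum2 !mxE !inord_eq // !inordK //= ?inordK //=; ring.
Qed.

Lemma isAut_of_coords (R : fieldType) (g : 'M[R]_8) :
  g \in unitmx ->
  (forall a b c d e f g' h a' b' c' d' e' f' g'' h' : R,
     oact g (omul (mk2 a b c d, mk2 e f g' h) (mk2 a' b' c' d', mk2 e' f' g'' h')) =
     omul (oact g (mk2 a b c d, mk2 e f g' h)) (oact g (mk2 a' b' c' d', mk2 e' f' g'' h'))) ->
  isAut g.
Proof. by move=> Ug gmul; split=> //; apply: oct_coord_ind. Qed.

Definition signed_perm_mx {R : pzRingType} {n : nat} (pl : seq nat) (sl : seq R) : 'M[R]_n :=
  \matrix_(i, j) if i == nth 0%N pl j :> nat then nth 0 sl j else 0.

Lemma signed_perm_mx_diag (R : comPzRingType) (n : nat) (pl : seq nat) (sl : seq R)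
    (d1 d2 : 'rV[R]_n.+1) :
  (forall j : 'I_n.+1, (nth 0%N pl j < n.+1)%N -> d2 0 (inord (nth 0%N pl j)) = d1 0 j) ->
  signed_perm_mx pl sl *m diag_mx d1 = diag_mx d2 *m signed_perm_mx pl sl.
Proof.
move=> d12; apply/matrixP=> i j; rewrite mul_mx_diag mul_diag_mx !mxE.
case: eqP => [ij | _]; last by rewrite mul0r mulr0.
have ltj : (nth 0%N pl j < n.+1)%N by rewrite -ij.
have -> : i = inord (nth 0%N pl j) by apply: val_inj; rewrite /= inordK.
by rewrite d12 // mulrC.
Qed.

Section ExplicitAutomorphisms.
Variable R : fieldType.

Definition g12 : 'M[R]_8 :=
  signed_perm_mx [:: 0; 4; 7; 3; 1; 5; 6; 2]%N [:: 1; 1; 1; 1; 1; -1; -1; 1].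

Lemma oact_g12 (a b c d e f g h : R) :
  oact g12 (mk2 a b c d, mk2 e f g h) = (mk2 a e h d, mk2 b (- f) (- g) c).
Proof.
rewrite /oact /oct_of_vec; congr pair; apply/matrixP; apply: ord2P; apply: ord2P.
all: rewrite !mxE !sum8 !mxE !(@inordK 7) //= ?inordK //=; ring.
Qed.

Lemma g12_orth : g12 *m g12^T = 1%:M.
Proof.
apply/matrixP; apply: ord8P; apply: ord8P.
all: rewrite !mxE sum8 !mxE !(@inordK 7) //= ?inord_eq //=; ring.
Qed.

Lemma g12_aut : isAut g12.
Proof.
apply: isAut_of_coords => [|a b c d e f g h a' b' c' d' e' f' g' h'].
  by case: (mulmx1_unit g12_orth).
by rewrite omul_mk2 !oact_g12 omul_mk2; congr pair; apply: f_equal4; ring.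
Qed.

Lemma g12_tmx : g12 *m tmx (-1) (-1) = tmx (-1) 1 *m g12.
Proof.
apply: signed_perm_mx_diag; apply: ord8P => _.
all: rewrite !mxE !(@inordK 7) //= ?invrN1 ?invr1; ring.
Qed.

Definition g13 : 'M[R]_8 :=
  signed_perm_mx [:: 0; 6; 5; 3; 1; 7; 4; 2]%N [:: 1; 1; -1; 1; 1; -1; 1; 1].

Lemma oact_g13 (a b c d e f g h : R) :
  oact g13 (mk2 a b c d, mk2 e f g h) = (mk2 a e h d, mk2 g (- c) b (- f)).
Proof.
rewrite /oact /oct_of_vec; congr pair; apply/matrixP; apply: ord2P; apply: ord2P.
all: rewrite !mxE !sum8 !mxE !(@inordK 7) //= ?inordK //=; ring.
Qed.

Lemma g13_orth : g13 *m g13^T = 1%:M.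
Proof.
apply/matrixP; apply: ord8P; apply: ord8P.
all: rewrite !mxE sum8 !mxE !(@inordK 7) //= ?inord_eq //=; ring.
Qed.

Lemma g13_aut : isAut g13.
Proof.
apply: isAut_of_coords => [|a b c d e f g h a' b' c' d' e' f' g' h'].
  by case: (mulmx1_unit g13_orth).
by rewrite omul_mk2 !oact_g13 omul_mk2; congr pair; apply: f_equal4; ring.
Qed.

Lemma g13_tmx : g13 *m tmx (-1) (-1) = tmx 1 (-1) *m g13.
Proof.
apply: signed_perm_mx_diag; apply: ord8P => _.
all: rewrite !mxE !(@inordK 7) //= ?invrN1 ?invr1; ring.
Qed.

(* g23 : (x, y) |-> (x, [[-y21, -y22], [y11, y12]]), i.e. y |-> J y with
   J = [[0, -1], [1, 0]]; it conjugates t(-1,1) to t(1,-1). *)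
Definition g23 : 'M[R]_8 :=
  signed_perm_mx [:: 0; 1; 2; 3; 6; 7; 4; 5]%N [:: 1; 1; 1; 1; 1; 1; -1; -1].

Lemma oact_g23 (a b c d e f g h : R) :
  oact g23 (mk2 a b c d, mk2 e f g h) = (mk2 a b c d, mk2 (- g) (- h) e f).
Proof.
rewrite /oact /oct_of_vec; congr pair; apply/matrixP; apply: ord2P; apply: ord2P.
all: rewrite !mxE !sum8 !mxE !(@inordK 7) //= ?inordK //=; ring.
Qed.

Lemma g23_orth : g23 *m g23^T = 1%:M.
Proof.
apply/matrixP; apply: ord8P; apply: ord8P.
all: rewrite !mxE sum8 !mxE !(@inordK 7) //= ?inord_eq //=; ring.
Qed.

Lemma g23_aut : isAut g23.
Proof.
apply: isAut_of_coords => [|a b c d e f g h a' b' c' d' e' f' g' h'].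
  by case: (mulmx1_unit g23_orth).
by rewrite omul_mk2 !oact_g23 omul_mk2; congr pair; apply: f_equal4; ring.
Qed.

Lemma g23_tmx : g23 *m tmx (-1) 1 = tmx 1 (-1) *m g23.
Proof.
apply: signed_perm_mx_diag; apply: ord8P => _.
all: rewrite !mxE !(@inordK 7) //= ?invrN1 ?invr1; ring.
Qed.

End ExplicitAutomorphisms.

Theorem mainTheorem6 (k : fieldType) (char2 : (2%:R : k) != 0) :
  [/\ inv_iso (tmx (-1 : k) (-1)) (tmx (-1) 1),
      inv_iso (tmx (-1 : k) (-1)) (tmx 1 (-1)) &
      inv_iso (tmx (-1 : k) 1) (tmx 1 (-1))].
Proof.
have m1_neq0 : (-1 : k) != 0 by rewrite oppr_eq0 oner_eq0.
have one_neq0 : (1 : k) != 0 by rewrite oner_eq0.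
split.
- exact: inv_iso_of_intertwiner (g12_aut k) (tmx_unit m1_neq0 m1_neq0) (g12_tmx k).
- exact: inv_iso_of_intertwiner (g13_aut k) (tmx_unit m1_neq0 m1_neq0) (g13_tmx k).
- exact: inv_iso_of_intertwiner (g23_aut k) (tmx_unit m1_neq0 one_neq0) (g23_tmx k).
Qed.
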